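(* Let $p$ be prime and let $V<W\le\mathbb F_p^k$ be subspaces with $\dim W=\dim V+1$. Let $x\in V^\perp\setminus W^\perp$ satisfy $|x|=\min_{v\in V^\perp\setminus W^\perp}|v|$. Then there is no $y\in V^\perp$ with $y\notin\langle x\rangle$ and $\mathrm{Supp}(y)\subseteq\mathrm{Supp}(x)$.
   Context: For $x\in\mathbb F_p^k$, $\mathrm{Supp}(x)=\{i: x_i\ne0\}$ and $|x|=|\mathrm{Supp}(x)|$. $V^\perp$ is the orthogonal complement under the standard dot product, and $\langle x\rangle$ is the span of $x$. *)

From HB Require Import structures.
From mathcomp Require Import all_boot all_order all_algebra.
Set Implicit Arguments. Unset Strict Implicit. Unset Printing Implicit Defensive.
Import GRing.Theory.
Local Open Scope ring_scope.

Definition dotv (F : fieldType) (k : nat) (x y : 'rV[F]_k) : F :=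
  \sum_(i < k) x 0 i * y 0 i.

Definition supp (F : fieldType) (k : nat) (x : 'rV[F]_k) : {set 'I_k} :=
  [set i | x 0 i != 0].

Definition wt (F : fieldType) (k : nat) (x : 'rV[F]_k) : nat := #|supp x|.

Definition in_perp (F : fieldType) (k : nat) (V : {vspace 'rV[F]_k}) (x : 'rV[F]_k) : Prop :=
  forall v, v \in V -> dotv x v = 0.

(* Write c := (y.w)/(x.w) for some w in W with x.w <> 0, and z := y - c x.
   Then z lies in V^perp and is orthogonal to w, it is nonzero because y is
   not a multiple of x, and its support lies in Supp(x).  Subtracting from x
   the multiple of z that kills one coordinate of Supp(z) gives a vector of
   V^perp \ W^perp (its dot product with w is still x.w) of weight < |x|. *)
From mathcomp Require Import all_boot all_order all_algebra.
From Stdlib Require Import Classical.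
Local Open Scope ring_scope.
Import GRing.Theory.

Section Support.

Context {F : fieldType} {k : nat}.
Implicit Types (a : F) (x y z w : 'rV[F]_k) (V : {vspace 'rV[F]_k}).

Lemma dotvZDl a x y w : dotv (a *: x + y) w = a * dotv x w + dotv y w.
Proof.
rewrite /dotv mulr_sumr -big_split /=; apply: eq_bigr => i _.
by rewrite !mxE mulrDl mulrA.
Qed.

Lemma in_perpZD V a x y : in_perp V x -> in_perp V y -> in_perp V (a *: x + y).
Proof. by move=> xV yV v vV; rewrite dotvZDl xV // yV // mulr0 addr0. Qed.

Lemma in_perpPn V x : ~ in_perp V x -> exists2 w, w \in V & dotv x w != 0.
Proof.
move=> xV; apply: NNPP => noW; apply: xV => w wV.
by have [|xw] := eqVneq (dotv x w) 0; last by case: noW; exists w.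
Qed.

Lemma supp_eq0 x : (supp x == set0) = (x == 0).
Proof.
apply/eqP/eqP => [x0 | ->]; last by apply/setP => i; rewrite !inE mxE eqxx.
apply/rowP => i; rewrite mxE; apply/eqP.
by move/setP: x0 => /(_ i); rewrite !inE => /negbFE.
Qed.

Lemma supp_scale_add a x y : supp (a *: x + y) \subset supp x :|: supp y.
Proof.
apply/subsetP => i; rewrite !inE !mxE; apply: contraR.
by rewrite negb_or !negbK => /andP[/eqP-> /eqP->]; rewrite mulr0 addr0.
Qed.

Lemma wt_cancel_lt x z :
  z != 0 -> supp z \subset supp x -> exists a, (wt (a *: z + x) < wt x)%N.
Proof.
move=> z0 szx; have [i zi] : exists i, i \in supp z.
  by apply/set0Pn; rewrite supp_eq0.
have xi := subsetP szx i zi; rewrite inE in zi.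
exists (- (x 0 i / z 0 i)); rewrite /wt (cardsD1 i (supp x)) xi add1n ltnS.
apply/subset_leq_card/subsetP => j uj; rewrite in_setD1; apply/andP; split.
  by apply: contraTneq uj => ->; rewrite inE !mxE mulNr divfK ?addNr ?eqxx.
by have /setUP[/(subsetP szx)|] := subsetP (supp_scale_add _ z x) j uj.
Qed.

End Support.

Theorem lemma7p3 (p k : nat) (pp : prime p) (V W : {vspace 'rV['F_p]_k})
  (x : 'rV['F_p]_k) :
  (V <= W)%VS -> \dim W = (\dim V).+1 ->
  in_perp V x -> ~ in_perp W x ->
  (forall v : 'rV['F_p]_k, in_perp V v -> ~ in_perp W v -> (wt x <= wt v)%N) ->
  ~ (exists y : 'rV['F_p]_k,
       [/\ in_perp V y, y \notin <[x]>%VS & supp y \subset supp x]).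
Proof.
move=> _ _ xV xW x_min [y [yV yx syx]].
have [w wW xw] := in_perpPn _ _ xW.
pose c := dotv y w / dotv x w; pose z := (- c) *: x + y.
have zw : dotv z w = 0 by rewrite dotvZDl mulNr divfK ?addNr.
have z0 : z != 0.
  apply: contraNneq yx => /eqP; rewrite /z addrC addr_eq0 scaleNr opprK => /eqP->.
  by rewrite memvZ ?memv_line.
have szx : supp z \subset supp x.
  by apply: subset_trans (supp_scale_add _ _ _) _; rewrite subUset subxx.
have [a lt_ux] := wt_cancel_lt _ _ z0 szx.
move: lt_ux; rewrite ltnNge => /negP; apply; apply: x_min.
  by apply: in_perpZD; [apply: in_perpZD|].
move=> /(_ w wW); by rewrite dotvZDl zw mulr0 add0r => /eqP; apply/negP.
Qed.
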